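(* Let $d$ be an even positive integer and $s$ a positive integer with $2s\leqslant d$. Let $\varepsilon,\gamma\in I^s\setminus\{\alpha,\omega\}$, $i=t(\varepsilon)$, $j=t(\gamma)$, and suppose $\varepsilon_s=0$. If either (1) $\varepsilon_s=\gamma_s=0$, or (2) $\gamma_s=1$ and $j\geqslant i$, then for every $x\in B_\varepsilon$ and $y\in B_\gamma$ we have $\langle\varepsilon,\gamma\rangle\leqslant\langle x,y\rangle$.
   Context: Let $I=\{0,1\}$; for binary vectors $x,y$ of the same length, $|x|=\sum_i x_i$ and $\langle x,y\rangle=\sum_i x_iy_i$. Let $\alpha=(0,\ldots,0)$, $\omega=(1,\ldots,1)\in I^s$. For $\varepsilon\in I^s\setminus\{\alpha,\omega\}$ let $t(\varepsilon)$ be the unique index $i$ with $\varepsilon_i\neq\varepsilon_{i+1}=\cdots=\varepsilon_s$, and $A_\varepsilon=\{\varepsilon_1\}\times\cdots\times\{\varepsilon_i\}\times I^{s-1-i}\subseteq I^{s-1}$ with $i=t(\varepsilon)$. Define subsets of $I^{d-s}$: $X_0=\{x\colon |x|\leqslant \frac d2-s\}$; $X_k=\{x\colon |x|=\frac d2-s+k\}$ for $0<k<s$; $X_s=\{x\colon |x|\geqslant \frac d2\}$. Writing $x\in I^{d-s}$ as $x=(x',x'')\in I^{d-2s+1}\times I^{s-1}$, for $\varepsilon\in I^s\setminus\{\alpha,\omega\}$ set $B_\varepsilon=X_{|\varepsilon|}\cap(I^{d-2s+1}\times A_\varepsilon)$. *)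

From mathcomp Require Import all_boot.
Set Implicit Arguments. Unset Strict Implicit. Unset Printing Implicit Defensive.

(* Binary vectors in I^n are represented as [seq bool] of size n;
   the paper's (1-based) coordinate x_k is [nth false x (k-1)]. *)

Definition wt (x : seq bool) : nat := count id x.

Definition ip (x y : seq bool) : nat := count (fun p => p.1 && p.2) (zip x y).

(* t(eps): the (1-based) index i with eps_i <> eps_{i+1} = ... = eps_s,
   i.e. the largest i < s with eps_i <> eps_{i+1}. *)
Definition tidx (eps : seq bool) : nat :=
  \max_(k < size eps | (k.+1 < size eps) &&
        (nth false eps k != nth false eps k.+1)) k.+1.

Definition inX (d s k : nat) (x : seq bool) : bool :=
  (size x == d - s) &&
  (if k == 0 then wt x <= d./2 - s
   else if k < s then wt x == d./2 - s + k
   else d./2 <= wt x).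

Definition inA (eps z : seq bool) : bool :=
  (size z == (size eps).-1) &&
  all (fun k => nth false z k == nth false eps k) (iota 0 (tidx eps)).

(* x \in B_eps = X_{|eps|} \cap (I^{d-2s+1} x A_eps), with x'' the last s-1 coordinates *)
Definition inB (d s : nat) (eps x : seq bool) : bool :=
  inX d s (wt eps) x && inA eps (drop (d - 2 * s + 1) x).

From mathcomp Require Import all_boot zify.

Set Implicit Arguments.
Unset Strict Implicit.
Unset Printing Implicit Defensive.

(* From index t(e) on, a vector e is constant, equal to its last coordinate,
   and every z in A_e agrees with e before that index.  If i <= j then eps
   vanishes from index i on; if j < i we are in case (1) and gam vanishes from
   index j on.  Either way <eps, gam> is the inner product of the prefixes of
   length m = min(i, j) of eps and gam, which are also the prefixes of x'' and
   y'', so it is at most <x, y>. *)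

Lemma ip_nseq_falsel n y : ip (nseq n false) y = 0.
Proof. by elim: n y => [|n IH] [|b y] //; rewrite /ip /= -/(ip _ _) IH. Qed.

Lemma ip_nseq_falser n x : ip x (nseq n false) = 0.
Proof. by elim: n x => [|n IH] [|a x] //; rewrite /ip /= -/(ip _ _) IH andbF. Qed.

Lemma ip_take_drop n x y :
  ip x y = ip (take n x) (take n y) + ip (drop n x) (drop n y).
Proof.
elim: x n y => [|a x IH] [|n] [|b y] //=;
  rewrite ?(ip_nseq_falsel 0) ?(ip_nseq_falser 0) //.
by rewrite /ip /= -!/(ip _ _) (IH n y) addnA.
Qed.

Lemma leq_ip_take n x y : ip (take n x) (take n y) <= ip x y.
Proof. by rewrite [ip x y](ip_take_drop n) leq_addr. Qed.

Lemma leq_ip_drop n x y : ip (drop n x) (drop n y) <= ip x y.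
Proof. by rewrite [ip x y](ip_take_drop n) leq_addl. Qed.

Lemma tidx_le_size e : tidx e <= (size e).-1.
Proof.
apply/bigmax_leqP => k /andP[lt_k1 _].
by rewrite -ltnS prednK // (leq_trans _ lt_k1).
Qed.

Lemma nth_tidx_succ e k : tidx e <= k -> k.+1 < size e ->
  nth false e k = nth false e k.+1.
Proof.
move=> le_tk lt_k1; apply/eqP; apply: contraTT le_tk => neq_k.
rewrite -ltnNge.
apply: (@leq_bigmax_cond _ _ (fun i : 'I_(size e) => i.+1) (Ordinal (ltnW lt_k1))).
by rewrite /= lt_k1.
Qed.

Lemma nth_tidx_last e k : tidx e <= k < size e ->
  nth false e k = nth false e (size e).-1.
Proof.
case/andP=> le_tk lt_k; move: (size e - k.+1) (subnK lt_k) => n.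
elim: n k le_tk {lt_k} => [|n IH] k le_tk def_e; first by rewrite -def_e.
rewrite (nth_tidx_succ le_tk); last by rewrite -def_e; lia.
by apply: IH; [exact: leqW | rewrite -def_e addSnnS].
Qed.

Lemma drop_tidx e :
  drop (tidx e) e = nseq (size e - tidx e) (nth false e (size e).-1).
Proof.
apply: (@eq_from_nth _ false); rewrite size_drop ?size_nseq // => k lt_k.
by rewrite nth_drop nth_nseq lt_k nth_tidx_last //; apply/andP; split; lia.
Qed.

Lemma inA_take e z : inA e z -> take (tidx e) z = take (tidx e) e.
Proof.
case/andP=> /eqP size_z /allP agree.
have le_te := tidx_le_size e.
apply: (@eq_from_nth _ false) => [|k]; rewrite !size_takel ?size_z //; try lia.
move=> lt_k; rewrite !nth_take //.
by apply/eqP/agree; rewrite mem_iota.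
Qed.

Lemma leq_ip_inA n m e g x y :
  m <= tidx e -> m <= tidx g -> ip (drop m e) (drop m g) = 0 ->
  inA e (drop n x) -> inA g (drop n y) -> ip e g <= ip x y.
Proof.
move=> le_me le_mg tail0 Ae Ag.
rewrite (ip_take_drop m) tail0 addn0.
rewrite -(take_takel e le_me) -(take_takel g le_mg) -(inA_take Ae) -(inA_take Ag).
rewrite !take_takel //.
exact: leq_trans (leq_ip_take m _ _) (leq_ip_drop n x y).
Qed.

Theorem lemma2 (d s : nat) (eps gam : seq bool) :
  0 < d -> ~~ odd d -> 0 < s -> 2 * s <= d ->
  size eps = s -> size gam = s ->
  eps <> nseq s false -> eps <> nseq s true ->
  gam <> nseq s false -> gam <> nseq s true ->
  nth false eps s.-1 = false ->
  (nth false gam s.-1 = false \/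
   (nth false gam s.-1 = true /\ tidx eps <= tidx gam)) ->
  forall x y : seq bool, inB d s eps x -> inB d s gam y ->
  ip eps gam <= ip x y.
Proof.
move=> _ _ _ _ size_eps size_gam _ _ _ _ eps_s cases x y.
case/andP=> _ Ax /andP[_ Ay].
have [le_ij | lt_ji] := leqP (tidx eps) (tidx gam).
  apply: leq_ip_inA le_ij _ Ax Ay => //.
  by rewrite drop_tidx size_eps eps_s ip_nseq_falsel.
have gam_s : nth false gam s.-1 = false.
  by case: cases => [// | [_]]; rewrite leqNgt lt_ji.
apply: leq_ip_inA (ltnW lt_ji) _ _ Ax Ay => //.
by rewrite [drop _ gam]drop_tidx size_gam gam_s ip_nseq_falser.
Qed.
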